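(* In the setting below, with $Q=L/\mu$, suppose $0<\eta\le\frac{1}{L(K+1)}$, let $a\ge2$ be an integer and set $\epsilon_i=2\eta L(\eta KL)^{i-1}$ for $i\ge 1$. Then for every integer $k\ge aK+1$, \[ \Big(1+\eta\frac{\mu}{8}\Big)F_{k+1}\le\Big(1-\sum_{i=1}^{a-1}\epsilon_i\Big)F_k+\sum_{i=1}^{a-1}\epsilon_i F_{k-iK}+4KQ\,\epsilon_{a-1}\sum_{j=k-aK}^{k}F_j . \]
   Context: Let $m,n\ge 1$ be integers and $\|\cdot\|$ the Euclidean norm on $\mathbb{R}^n$. For $i=1,\dots,m$, let $f_i:\mathbb{R}^n\to\mathbb{R}$ be continuously differentiable with $\|\nabla f_i(x)-\nabla f_i(y)\|\le L_i\|x-y\|$ for all $x,y$, where $L_i\ge 0$ (the $f_i$ are not assumed convex). Let $f=\frac1m\sum_{i=1}^m f_i$ and $L=\frac1m\sum_{i=1}^m L_i$. Assume $f$ is $\mu$-strongly convex for some $\mu>0$ (i.e. $x\mapsto f(x)-\frac{\mu}{2}\|x\|^2$ is convex). Let $r:\mathbb{R}^n\to(-\infty,\infty]$ be proper, closed and convex, let $F=f+r$, and let $x^*$ be the unique minimizer of $F$. For $\eta>0$ define $\mathrm{prox}_r^\eta(y)=\arg\min_{x\in\mathbb{R}^n}\{\frac12\|x-y\|^2+\eta r(x)\}$. PIAG method: fix an integer $K\ge 0$, a step size $\eta>0$ and $x_0\in\mathbb{R}^n$; for each $k\ge0$ and each $i$ let $\tau_{i,k}$ be any (deterministically chosen) integer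 with $\max(k-K,0)\le\tau_{i,k}\le k$; set $g_k=\frac1m\sum_{i=1}^m\nabla f_i(x_{\tau_{i,k}})$ and $x_{k+1}=\mathrm{prox}_r^\eta(x_k-\eta g_k)$. Define $F_k=F(x_k)-F(x^* )$. *)

From HB Require Import structures.
From mathcomp Require Import all_boot all_order all_algebra.
From mathcomp Require Import all_classical all_reals all_analysis.
Set Implicit Arguments. Unset Strict Implicit. Unset Printing Implicit Defensive.
Import Order.TTheory GRing.Theory Num.Theory.
Import numFieldNormedType.Exports.
Local Open Scope ring_scope.

Section Defs.
Variables (R : realType) (n : nat).
Local Notation vec := 'rV[R]_n.

Definition dotv (u v : vec) : R := \sum_(j < n) u 0 j * v 0 j.
Definition enorm (u : vec) : R := Num.sqrt (\sum_(j < n) u 0 j ^+ 2).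

Definition is_gradient (h : vec -> R) (g : vec -> vec) : Prop :=
  forall x, differentiable h x /\ forall v, 'd h x v = dotv (g x) v.

Definition convex_fun (h : vec -> R) : Prop :=
  forall (x y : vec) (t : R), 0 <= t <= 1 ->
    h (t *: x + (1 - t) *: y) <= t * h x + (1 - t) * h y.

Definition strongly_convex (mu : R) (h : vec -> R) : Prop :=
  convex_fun (fun x => h x - mu / 2 * enorm x ^+ 2).

Definition proper_fun (r : vec -> \bar R) : Prop :=
  (forall x, r x != -oo%E) /\ exists x, r x \is a fin_num.
Definition closed_fun (r : vec -> \bar R) : Prop :=
  closed [set p : vec * R | (r p.1 <= p.2%:E)%E].
Definition convex_efun (r : vec -> \bar R) : Prop :=
  forall (x y : vec) (t : R), 0 < t < 1 ->
    (r (t *: x + (1 - t) *: y)%R <= t%:E * r x + (1 - t)%R%:E * r y)%E.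

Definition is_prox (r : vec -> \bar R) (eta : R) (y p : vec) : Prop :=
  forall z, ((2^-1 * enorm (p - y) ^+ 2)%:E + eta%:E * r p
             <= (2^-1 * enorm (z - y) ^+ 2)%:E + eta%:E * r z)%E.

End Defs.

From HB Require Import structures.
From mathcomp Require Import all_boot all_order all_algebra.
From mathcomp Require Import all_classical all_reals all_analysis.
From mathcomp Require Import ring lra zify.
Set Implicit Arguments. Unset Strict Implicit. Unset Printing Implicit Defensive.
Import Order.TTheory GRing.Theory Num.Theory.
Import numFieldNormedType.Exports.
Local Open Scope ring_scope.

(* Write D_k = x_(k+1) - x_k for the steps and e_k = g_k - grad f(x_k) for the error
   caused by the delayed gradients.  The prox inequality, the descent lemma and strong
   convexity give, for k >= 1,
     (1 + eta mu / 8) F_(k+1) <= F_k + eta |e_k|^2,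
     (1 - eta L) |D_k|^2 <= 2 eta (F_k - F_(k+1)) + eta^2 |e_k|^2,
     mu |D_k|^2 <= 4 (F_k + F_(k+1)),
   and since the delays reach back at most K steps, Lipschitz continuity gives
     |e_k|^2 <= L^2 K sum_(k-K <= j < k) |D_j|^2.
   Starting from the first inequality, alternately applying the error bound and the
   second inequality over windows of length K, 2K, ..., (a-1)K trades the error for the
   differences F_(k-iK) - F_k, each new window costing a factor eta K L; the squared
   steps left in the last window are paid for with the third inequality. *)

Section Euclidean.
Variables (R : realType) (n : nat).
Implicit Types (u v w : 'rV[R]_n).

Lemma dotvC u v : dotv u v = dotv v u.
Proof. by apply: eq_bigr => j _; rewrite mulrC. Qed.

Lemma dotvDl u v w : dotv (u + v) w = dotv u w + dotv v w.
Proof. by rewrite /dotv -big_split; apply: eq_bigr => j _; rewrite mxE mulrDl. Qed.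

Lemma dotvZl (c : R) u v : dotv (c *: u) v = c * dotv u v.
Proof. by rewrite /dotv mulr_sumr; apply: eq_bigr => j _; rewrite mxE mulrA. Qed.

Lemma dotvNl u v : dotv (- u) v = - dotv u v.
Proof. by rewrite -scaleN1r dotvZl mulN1r. Qed.

Lemma dotvBl u v w : dotv (u - v) w = dotv u w - dotv v w.
Proof. by rewrite dotvDl dotvNl. Qed.

Lemma dotvDr u v w : dotv u (v + w) = dotv u v + dotv u w.
Proof. by rewrite dotvC dotvDl !(dotvC u). Qed.

Lemma dotvZr (c : R) u v : dotv u (c *: v) = c * dotv u v.
Proof. by rewrite dotvC dotvZl dotvC. Qed.

Lemma dotvBr u v w : dotv u (v - w) = dotv u v - dotv u w.
Proof. by rewrite dotvC dotvBl !(dotvC u). Qed.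

Lemma dotvNr u v : dotv u (- v) = - dotv u v.
Proof. by rewrite dotvC dotvNl dotvC. Qed.

Lemma dotv0l v : dotv 0 v = 0.
Proof. by rewrite -(scale0r 0) dotvZl mul0r. Qed.

Lemma dotv_suml (I : finType) (F : I -> 'rV[R]_n) v :
  dotv (\sum_i F i) v = \sum_i dotv (F i) v.
Proof.
rewrite /dotv exchange_big /=; apply: eq_bigr => j _.
by rewrite summxE mulr_suml.
Qed.

Lemma dotv_ge0 u : 0 <= dotv u u.
Proof. by apply: sumr_ge0 => j _; rewrite -expr2 sqr_ge0. Qed.

Lemma dotv_young (a b : R) u v :
  2 * a * b * dotv u v <= a ^+ 2 * dotv u u + b ^+ 2 * dotv v v.
Proof.
have := dotv_ge0 (a *: u - b *: v).
rewrite !(dotvBl, dotvBr, dotvZl, dotvZr) (dotvC v u); nra.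
Qed.

Lemma dotvB_le u v : dotv (u - v) (u - v) <= 2 * dotv u u + 2 * dotv v v.
Proof. by have := dotv_young 1 (-1) u v; rewrite !(dotvBl, dotvBr) (dotvC v u); lra. Qed.

Lemma enorm_ge0 u : 0 <= enorm u.
Proof. exact: sqrtr_ge0. Qed.

Lemma sqr_enorm u : enorm u ^+ 2 = dotv u u.
Proof.
rewrite /enorm sqr_sqrtr; last by apply: sumr_ge0 => j _; rewrite sqr_ge0.
by apply: eq_bigr => j _; rewrite expr2.
Qed.

Lemma enorm_eq0 u : enorm u = 0 -> u = 0.
Proof.
move=> u0; apply/matrixP => i j; rewrite mxE (ord1 i).
have /psumr_eq0P uj0 : dotv u u = 0 by rewrite -sqr_enorm u0 expr0n.
by apply/eqP; rewrite -sqrf_eq0 expr2 uj0 // => k _; rewrite -expr2 sqr_ge0.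
Qed.

Lemma cauchy_schwarz u v : dotv u v <= enorm u * enorm v.
Proof.
have [u0|nu0] := eqVneq (enorm u) 0; first by rewrite u0 (enorm_eq0 u0) dotv0l mul0r.
have [v0|nv0] := eqVneq (enorm v) 0.
  by rewrite v0 (enorm_eq0 v0) dotvC dotv0l mulr0.
have uv_gt0 : 0 < enorm u * enorm v by rewrite mulr_gt0 // lt_def ?nu0 ?nv0 enorm_ge0.
have := dotv_young (enorm v) (enorm u) u v; rewrite -!sqr_enorm => uv.
by rewrite -(ler_pM2l uv_gt0); lra.
Qed.

Lemma enormZ (c : R) u : enorm (c *: u) = `|c| * enorm u.
Proof.
apply: (@pexpIrn _ 2) => //; rewrite ?nnegrE ?mulr_ge0 ?enorm_ge0 //.
by rewrite exprMn !sqr_enorm dotvZl dotvZr mulrA -expr2 real_normK ?num_real.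
Qed.

Lemma enormD u v : enorm (u + v) <= enorm u + enorm v.
Proof.
rewrite -(@ler_pXn2r _ 2) // ?nnegrE ?addr_ge0 ?enorm_ge0 //.
rewrite sqrrD !sqr_enorm dotvDl !dotvDr (dotvC v u).
have := cauchy_schwarz u v; lra.
Qed.

Lemma enorm_sum (I : Type) (s : seq I) (P : pred I) (F : I -> 'rV[R]_n) :
  enorm (\sum_(i <- s | P i) F i) <= \sum_(i <- s | P i) enorm (F i).
Proof.
elim/big_ind2: _ => [|u1 u2 a1 a2 h1 h2|//]; last first.
  exact: le_trans (enormD _ _) (lerD h1 h2).
by rewrite /enorm big1 ?sqrtr0 // => j _; rewrite mxE expr0n.
Qed.

Lemma enormN u : enorm (- u) = enorm u.
Proof. by rewrite -scaleN1r enormZ normrN1 mul1r. Qed.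

Lemma enormB_le_sum (x : nat -> 'rV[R]_n) s l : (s <= l)%N ->
  enorm (x l - x s) <= \sum_(s <= j < l) enorm (x j.+1 - x j).
Proof. by move=> sl; rewrite -telescope_sumr //; exact: enorm_sum. Qed.

End Euclidean.

Section Sums.
Variable R : realDomainType.

Lemma sqr_sum_le (I : Type) (s : seq I) (w : I -> R) :
  (\sum_(i <- s) w i) ^+ 2 <= (size s)%:R * \sum_(i <- s) w i ^+ 2.
Proof.
have sum_const (c : R) : \sum_(i <- s) c = (size s)%:R * c.
  by rewrite big_const_seq count_predT iter_addr_0 mulr_natl.
have -> : (\sum_(i <- s) w i) ^+ 2 = \sum_(i <- s) \sum_(j <- s) w i * w j.
  by rewrite expr2 mulr_suml; under eq_bigr do rewrite mulr_sumr.
rewrite -(ler_pM2l (ltr0n R 2)) [X in X <= _]mulr_sumr.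
apply: (@le_trans _ _ (\sum_(i <- s) \sum_(j <- s) (w i ^+ 2 + w j ^+ 2))).
  apply: ler_sum => i _; rewrite mulr_sumr; apply: ler_sum => j _.
  by have := sqr_ge0 (w i - w j); lra.
under eq_bigr do rewrite big_split /= sum_const.
by rewrite big_split /= sum_const -mulr_sumr; lra.
Qed.

Lemma ler_psum_nat_widen (w : nat -> R) (a a' b' b : nat) :
  (a <= a')%N -> (b' <= b)%N -> (forall j, (a <= j < b)%N -> 0 <= w j) ->
  \sum_(a' <= j < b') w j <= \sum_(a <= j < b) w j.
Proof.
move=> aa' b'b w_ge0; have [a'b'|b'a'] := leqP a' b'; last first.
  by rewrite big_geq 1?ltnW // big_nat_cond sumr_ge0 // => j /andP[/w_ge0].
rewrite (@big_cat_nat _ _ _ a' a b) ?(leq_trans a'b') //.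
rewrite (@big_cat_nat _ _ _ b' a' b) //=.
apply: ler_wpDl; last rewrite lerDl;
  by rewrite big_nat_cond sumr_ge0 // => j /andP[/andP[? ?] _]; apply: w_ge0; lia.
Qed.

Lemma sum_window_le (w : nat -> R) (K s k : nat) :
  (K <= s <= k)%N -> (forall j, 0 <= w j) ->
  \sum_(s <= l < k) \sum_(l - K <= j < l) w j <= K%:R * \sum_(s - K <= j < k) w j.
Proof.
move=> /andP[Ks sk] w_ge0.
have window l : (K <= l)%N -> \sum_(l - K <= j < l) w j = \sum_(i < K) w (l - K + i)%N.
  move=> Kl; rewrite -{1}[(l - K)%N]add0n big_addn subKn // big_mkord.
  by apply: eq_bigr => i _; rewrite addnC.
rewrite (eq_big_nat _ _ (F2 := fun l => \sum_(i < K) w (l - K + i)%N)); last first.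
  by move=> l /andP[sl _]; apply: window; apply: leq_trans sl.
rewrite exchange_big /= -[in K%:R](card_ord K) mulr_natl -sumr_const.
apply: ler_sum => i _; rewrite -{1}(subnK Ks) big_addn.
under eq_bigr do rewrite addnK.
rewrite -(addnK i (k - K)%N) -(big_addn _ _ _ (fun _ => true)).
by apply: ler_psum_nat_widen => //; have := ltn_ord i; lia.
Qed.
End Sums.

Lemma ler_of_ler_addMt (R : realFieldType) (a b c : R) :
  (forall t, 0 < t < 1 -> a <= b + t * c) -> a <= b.
Proof.
move=> H; apply/ler_addgt0Pr => e e_gt0.
set c' := `|c| + 1; have c'_gt0 : 0 < c' by rewrite ltr_wpDl.
set t := e / (e + c'); have ec'_gt0 : 0 < e + c' by rewrite addr_gt0.
have t_gt0 : 0 < t by rewrite divr_gt0.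
have t_lt1 : t < 1 by rewrite ltr_pdivrMr // mul1r ltrDl.
have := H t (ltac:(by rewrite t_gt0 t_lt1)).
have : t * c <= t * c' by rewrite ler_pM2l // (le_trans (ler_norm c)) // lerDl.
have : t * c' <= e by rewrite mulrAC ler_pdivrMr // ler_pM2l // lerDr ltW.
lra.
Qed.

Section DelayedRecursion.
Variables (R : realFieldType) (F d e : nat -> R) (eta L mu : R) (K a k : nat).
Hypothesis eta_gt0 : 0 < eta.
Hypothesis L_gt0 : 0 < L.
Hypothesis mu_gt0 : 0 < mu.
Hypothesis eta_small : eta * L * (K.+1)%:R <= 1.
Hypothesis a_ge2 : (2 <= a)%N.
Hypothesis k_gt : (a * K < k)%N.
Hypothesis F_ge0 : forall j, (k - a * K <= j)%N -> 0 <= F j.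
Hypothesis d_ge0 : forall j, 0 <= d j.
Hypothesis F_step : (1 + eta * mu / 8) * F k.+1 <= F k + eta * e k.
Hypothesis d_step : forall j, (k - a * K <= j)%N ->
  (1 - eta * L) * d j <= 2 * eta * (F j - F j.+1) + eta ^+ 2 * e j.
Hypothesis e_window : forall l, e l <= L ^+ 2 * K%:R * \sum_(l - K <= j < l) d j.
Hypothesis d_le_F : forall j, (k - a * K <= j)%N -> mu * d j <= 4 * (F j + F j.+1).

Local Notation z := (eta * K%:R * L).
Local Notation eps i := (2 * eta * L * z ^+ (i - 1)).
(* After [i] rounds of substitution the only remainder is [c i * T i]. *)
Let c i := L * (1 - eta * L) * z ^+ (i - 1).
Let T i := \sum_(k - i * K <= j < k) d j.

Let L_ge0 : 0 <= L. Proof. exact: ltW. Qed.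

Let z_le : z <= 1 - eta * L.
Proof. by move: eta_small; rewrite -natr1 mulrDr mulr1; lra. Qed.

Let z_ge0 : 0 <= z.
Proof. by rewrite !mulr_ge0 ?ler0n ?ltW. Qed.

Let T_ge0 i : 0 <= T i.
Proof. exact: sumr_ge0. Qed.

Lemma recursion_level_step N : (0 < N < a)%N ->
  c N * T N <= eps N * (F (k - N * K) - F k) + c N.+1 * T N.+1.
Proof.
move=> /andP[N_gt0 Na]; set s := (k - N * K)%N.
have [sK sk lo_s] : [/\ (K <= s)%N, (s <= k)%N & (k - a * K <= s)%N].
  have : (N.+1 * K <= a * K)%N by rewrite leq_mul2r Na orbT.
  by move: k_gt; rewrite /s; split; lia.
have sKE : (s - K)%N = (k - N.+1 * K)%N by rewrite /s mulSn addnC subnDA.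
have dT : (1 - eta * L) * T N <= 2 * eta * (F s - F k) + eta ^+ 2 * \sum_(s <= j < k) e j.
  have -> : F s - F k = \sum_(s <= j < k) (F j - F j.+1).
    by rewrite -opprB -telescope_sumr // -sumrN; apply: eq_bigr => j _; rewrite opprB.
  rewrite /T -/s !mulr_sumr -big_split; apply: ler_sum_nat => j /andP[sj _].
  by apply: d_step; apply: leq_trans lo_s sj.
have eT : \sum_(s <= j < k) e j <= L ^+ 2 * K%:R * (K%:R * T N.+1).
  apply: le_trans (ler_sum_nat (fun j _ => e_window j)) _.
  rewrite -mulr_sumr ler_wpM2l ?mulr_ge0 ?sqr_ge0 ?ler0n // /T -sKE.
  by apply: sum_window_le => //; apply/andP.
have X_ge0 : 0 <= L * z ^+ (N - 1) by rewrite mulr_ge0 ?exprn_ge0.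
have := ler_wpM2l X_ge0 dT.
have := ler_wpM2l X_ge0 (ler_wpM2l (sqr_ge0 eta) eT).
have := ler_wpM2l (mulr_ge0 X_ge0 (mulr_ge0 z_ge0 (T_ge0 N.+1))) z_le.
rewrite /c (_ : (N.+1 - 1)%N = (N - 1).+1) ?exprS; last by lia.
lra.
Qed.

Lemma recursion_level i : (0 < i)%N -> (i <= a)%N ->
  (1 + eta * mu / 8) * F k.+1 <=
    F k + \sum_(1 <= l < i) eps l * (F (k - l * K) - F k) + c i * T i.
Proof.
elim: i => [//|[_ _|i IH _ ia]].
  rewrite big_geq // addr0 /c /T subnn expr0 mulr1 mul1n.
  have := ler_wpM2l (ltW eta_gt0) (e_window k).
  have := ler_wpM2l (mulr_ge0 L_ge0 (T_ge0 1)) z_le.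
  by move: F_step; rewrite /T mul1n; lra.
rewrite big_nat_recr //=.
have := IH isT (ltnW ia); have := @recursion_level_step i.+1 ia; lra.
Qed.

Lemma delayed_recursion :
  (1 + eta * mu / 8) * F k.+1 <=
    (1 - \sum_(1 <= i < a) eps i) * F k + \sum_(1 <= i < a) eps i * F (k - i * K)
    + 4 * K%:R * (L / mu) * eps (a - 1) * \sum_(k - a * K <= j < k.+1) F j.
Proof.
set S := \sum_(k - a * K <= j < k.+1) F j.
have tail : c a * T a <= 4 * K%:R * (L / mu) * eps (a - 1) * S.
  have TS : mu * T a <= 8 * S.
    have sk : (k - a * K <= k)%N := leq_subr _ _.
    have S_recr : S = \sum_(k - a * K <= j < k) F j + F k by rewrite /S big_nat_recr.
    have S_recl : S = F (k - a * K) + \sum_(k - a * K <= j < k) F j.+1.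
      by rewrite /S big_nat_recl.
    have : mu * T a <= 4 * (\sum_(k - a * K <= j < k) F j + \sum_(k - a * K <= j < k) F j.+1).
      rewrite /T mulr_sumr -big_split mulr_sumr; apply: ler_sum_nat => j /andP[sj _].
      exact: d_le_F.
    by have := F_ge0 sk; have := F_ge0 (leqnn _); lra.
  have X_ge0 : 0 <= L * z ^+ (a - 1) / mu.
    exact: divr_ge0 (mulr_ge0 L_ge0 (exprn_ge0 _ z_ge0)) (ltW mu_gt0).
  apply: le_trans (_ : _ <= L * z ^+ (a - 1) / mu * (mu * T a)) _.
    rewrite [leRHS]mulrA divfK ?gt_eqF // /c ler_wpM2r ?T_ge0 //.
    by have := mulr_ge0 (mulr_ge0 L_ge0 (exprn_ge0 (a - 1) z_ge0)) (mulr_ge0 (ltW eta_gt0) L_ge0); lra.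
  apply: le_trans (ler_wpM2l X_ge0 TS) _.
  rewrite (_ : (a - 1)%N = (a - 2).+1) ?exprS ?subSS ?subn0; last by lia.
  lra.
have := recursion_level (ltnW a_ge2) (leqnn a).
have -> : \sum_(1 <= l < a) eps l * (F (k - l * K) - F k) =
    \sum_(1 <= i < a) eps i * F (k - i * K) - (\sum_(1 <= i < a) eps i) * F k.
  by rewrite mulr_suml -sumrB; apply: eq_bigr => i _; rewrite mulrBr.
lra.
Qed.
End DelayedRecursion.

Section Calculus.
Variables (R : realType) (n : nat).
Local Notation vec := 'rV[R]_n.
Local Open Scope classical_set_scope.

Lemma derive_le_of_quadratic_bound (h : vec -> R) (x v : vec) (D A B : R) :
  is_derive x v h D ->
  (forall t, 0 < t < 1 -> h (x + t *: v) <= h x + t * A + t ^+ 2 * B) -> D <= A.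
Proof.
move=> hD hb.
have at_right_sub : (0 : R)^'+ `=>` 0^'.
  move=> P; rewrite /at_right /dnbhs /within /=; apply: filterS => y Py y_gt0.
  by apply: Py; exact: lt0r_neq0.
have q0 : (fun s : R => s^-1 *: ((h \o shift x) (s *: v) - h x)) @ 0^' --> D.
  by rewrite -(@derive_val _ _ _ _ _ _ _ hD); exact: (@ex_derive _ _ _ _ _ _ _ hD).
have q : (fun s : R => s^-1 *: ((h \o shift x) (s *: v) - h x) - s * B) @ 0^'+ --> D - 0 * B.
  apply: cvgB; first exact: cvg_trans (cvg_app _ at_right_sub) q0.
  by apply: cvgMr_tmp; apply: cvg_at_right_filter; exact: cvg_id.
rewrite mul0r subr0 in q; apply: (cvgr_to_le q); near=> s.
have s_gt0 : 0 < s by near: s; exact: nbhs_right_gt.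
have s_lt1 : s < 1 by near: s; exact: nbhs_right_lt.
have := hb s (ltac:(by rewrite s_gt0 s_lt1)).
rewrite [x + _]addrC /= /GRing.scale /= => hs.
by rewrite lerBlDr mulrC ler_pdivrMr //; lra.
Unshelve. all: by end_near.
Qed.

Lemma is_derive_line (h dh : vec -> R) (x v : vec) (t : R) :
  (forall y, is_derive y v h (dh y)) -> is_derive t 1 (fun s => h (x + s *: v)) (dh (x + t *: v)).
Proof.
move=> hD; have hy := hD (x + t *: v).
have quot : (fun s : R => s^-1 *: ((fun s => h (x + s *: v)) (s *: 1 + t) - h (x + t *: v))) =
  (fun s : R => s^-1 *: (h (s *: v + (x + t *: v)) - h (x + t *: v))).
  by apply/funext => s /=; rewrite -[s *: 1]/(s * 1) mulr1 scalerDl addrCA addrC.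
split; first by rewrite /derivable /= quot; exact: (@ex_derive _ _ _ _ _ _ _ hy).
by rewrite /derive /= quot; exact: (@derive_val _ _ _ _ _ _ _ hy).
Qed.

Lemma smooth_upper_bound (h : vec -> R) (G : vec -> vec) (L : R) (x v : vec) :
  (forall y w, is_derive y w h (dotv (G y) w)) ->
  (forall y w, enorm (G y - G w) <= L * enorm (y - w)) ->
  h (x + v) <= h x + dotv (G x) v + L / 2 * dotv v v.
Proof.
move=> hD G_lip; set c := dotv (G x) v; set b := L / 2 * dotv v v.
pose psi := (fun t : R => h (x + t *: v)) - ((fun t => c * t) + (fun t => b * t ^+ 2)).
pose dpsi t := dotv (G (x + t *: v)) v - (c + b * (2 * t)).
have psi_derive (t : R) : is_derive t 1 psi (dpsi t).
  have := @is_derive_line h (fun y => dotv (G y) v) x v t (fun y => hD y v).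
  by move=> ?; apply: is_derive_eq; rewrite /dpsi /GRing.scale /=; ring.
have [t0 t0_in psi10] :
    exists2 t0, t0 \in `]0, 1[%R & psi 1 - psi 0 = dpsi t0 * (1 - 0).
  apply: MVT => //; apply: continuous_subspaceT => t.
  apply: differentiable_continuous; apply/derivable1_diffP.
  exact: (@ex_derive _ _ _ _ _ _ _ (psi_derive t)).
have t0_ge0 : 0 <= t0 by move: t0_in; rewrite in_itv /= => /andP[/ltW].
have dpsi_le0 : dpsi t0 <= 0.
  have := cauchy_schwarz (G (x + t0 *: v) - G x) v.
  have := G_lip (x + t0 *: v) x.
  have -> : x + t0 *: v - x = t0 *: v by rewrite addrC addKr.
  rewrite enormZ ger0_norm //.
  rewrite dotvBl /dpsi /b /c -sqr_enorm.
  have := enorm_ge0 v; have := enorm_ge0 (G (x + t0 *: v) - G x); nra.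
have psiE t : psi t = h (x + t *: v) - (c * t + b * t ^+ 2) by [].
move: psi10; rewrite !psiE scale0r scale1r addr0 expr0n expr1n /= !mulr0 !mulr1 !addr0.
by rewrite !subr0; lra.
Qed.

Lemma strongly_convex_comb (mu : R) (h : vec -> R) (x y : vec) (t : R) :
  strongly_convex mu h -> 0 <= t <= 1 ->
  h (t *: y + (1 - t) *: x) <=
    t * h y + (1 - t) * h x - mu / 2 * (t * (1 - t)) * dotv (y - x) (y - x).
Proof.
move=> h_sc t01; have := h_sc y x t t01; rewrite /= !sqr_enorm.
by rewrite !(dotvBl, dotvBr, dotvDl, dotvDr, dotvZl, dotvZr) (dotvC x y); lra.
Qed.

Lemma strongly_convex_grad (mu : R) (h : vec -> R) (G : vec -> vec) (x y : vec) :
  strongly_convex mu h -> (forall z v, is_derive z v h (dotv (G z) v)) ->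
  h x + dotv (G x) (y - x) + mu / 2 * dotv (y - x) (y - x) <= h y.
Proof.
move=> h_sc hD; set d := y - x; set dd := dotv d d.
suff : dotv (G x) d <= h y - h x - mu / 2 * dd by lra.
apply: (@derive_le_of_quadratic_bound h x d _ _ (mu / 2 * dd) (hD x d)).
move=> t /andP[t_gt0 t_lt1].
have -> : x + t *: d = t *: y + (1 - t) *: x by rewrite scalerBr scalerBl scale1r addrCA.
have t01 : 0 <= t <= 1 by rewrite !ltW.
by have := strongly_convex_comb x y h_sc t01; rewrite -/d -/dd; nra.
Qed.

End Calculus.

Section ProperConvex.
Variables (R : realType) (n : nat).
Local Notation vec := 'rV[R]_n.
Variable r : vec -> \bar R.
Hypotheses (r_proper : proper_fun r) (r_convex : convex_efun r).

Lemma proper_fin_numP p : reflect (r p <> +oo%E) (r p \is a fin_num).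
Proof. by rewrite fin_numE r_proper.1 /=; apply: (iffP idP) => [/eqP|/eqP]. Qed.

Lemma proper_le_fin_num p (c : R) : (r p <= c%:E)%E -> r p \is a fin_num.
Proof. by move=> rpc; apply/proper_fin_numP => rp; move: rpc; rewrite rp leye_eq. Qed.

Lemma prox_fin_num (eta : R) y p : 0 < eta -> is_prox r eta y p -> r p \is a fin_num.
Proof.
move=> eta_gt0 p_prox; apply/proper_fin_numP => rp.
have [z rz] := r_proper.2; have := p_prox z.
by rewrite rp -(fineK rz) -EFinM -EFinD mulry gtr0_sg // mul1e addey // leye_eq.
Qed.

Lemma convex_efun_fin a b (t : R) : 0 < t < 1 ->
  r a \is a fin_num -> r b \is a fin_num ->
  r (t *: a + (1 - t) *: b) \is a fin_num /\
  fine (r (t *: a + (1 - t) *: b)) <= t * fine (r a) + (1 - t) * fine (r b).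
Proof.
move=> t01 ra rb; have := r_convex a b t01.
rewrite -(fineK ra) -(fineK rb) -!EFinM -EFinD => rw.
have rw_fin := proper_le_fin_num rw.
by split=> //; rewrite -lee_fin (fineK rw_fin).
Qed.

Lemma prox_ineq (eta : R) y p z : 0 < eta -> is_prox r eta y p -> r z \is a fin_num ->
  eta * (fine (r p) - fine (r z)) <= dotv (p - y) (z - p).
Proof.
move=> eta_gt0 p_prox rz; have rp := prox_fin_num eta_gt0 p_prox.
apply: (@ler_of_ler_addMt _ _ _ (2^-1 * dotv (z - p) (z - p))) => t t01.
have [rw rw_le] := convex_efun_fin t01 rz rp.
have prox_w := p_prox (t *: z + (1 - t) *: p).
rewrite -(fineK rp) -(fineK rw) -!EFinM -!EFinD lee_fin !sqr_enorm in prox_w.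
have wE : t *: z + (1 - t) *: p - y = (p - y) + t *: (z - p).
  by apply/matrixP => i j; rewrite !mxE; ring.
move: prox_w; rewrite wE; move: (p - y) (z - p) => P Z.
rewrite !(dotvDl, dotvDr, dotvZl, dotvZr) (dotvC Z P) => prox_w.
have /andP[t_gt0 _] := t01.
rewrite -(ler_pM2l t_gt0); have := ler_wpM2l (ltW eta_gt0) rw_le; nra.
Qed.

Section Minimizer.
Variables (f : vec -> R) (xs : vec).
Hypothesis xs_min : forall w, ((f xs)%:E + r xs <= (f w)%:E + r w)%E.

Lemma argmin_fin_num : r xs \is a fin_num.
Proof.
have [z rz] := r_proper.2; apply: (@proper_le_fin_num _ (f z + fine (r z) - f xs)).
by rewrite EFinB EFinD fineK // leeBrDl //; exact: xs_min.
Qed.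

Lemma argmin_le w : r w \is a fin_num -> f xs + fine (r xs) <= f w + fine (r w).
Proof. by move=> rw; rewrite -lee_fin !EFinD !fineK // argmin_fin_num. Qed.

Lemma strongly_convex_argmin_growth (mu : R) y : strongly_convex mu f ->
  r y \is a fin_num ->
  f xs + fine (r xs) + mu / 2 * dotv (y - xs) (y - xs) <= f y + fine (r y).
Proof.
move=> f_sc ry; apply: (@ler_of_ler_addMt _ _ _ (mu / 2 * dotv (y - xs) (y - xs))).
move=> t t01; have /andP[t_gt0 t_lt1] := t01.
have [rw rw_le] := convex_efun_fin t01 ry argmin_fin_num.
have t01' : 0 <= t <= 1 by rewrite !ltW.
rewrite -(ler_pM2l t_gt0).
have := argmin_le rw; have := strongly_convex_comb xs y f_sc t01'; lra.
Qed.

End Minimizer.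
End ProperConvex.

Section InexactProxGradient.
Variables (R : realType) (n : nat).
Local Notation vec := 'rV[R]_n.
Variables (f : vec -> R) (G : vec -> vec) (r : vec -> \bar R) (L mu eta : R).
Hypothesis f_derive : forall y v, is_derive y v f (dotv (G y) v).
Hypothesis G_lip : forall u v, enorm (G u - G v) <= L * enorm (u - v).
Hypothesis f_sc : strongly_convex mu f.
Hypotheses (r_proper : proper_fun r) (r_convex : convex_efun r).
Hypothesis eta_gt0 : 0 < eta.

Local Notation phi y := (f y + fine (r y)).

Lemma prox_grad_ineq (xk gk p z : vec) :
  is_prox r eta (xk - eta *: gk) p -> r z \is a fin_num ->
  eta * (phi p - phi z) <=
    eta * L / 2 * dotv (p - xk) (p - xk) - eta * mu / 2 * dotv (z - xk) (z - xk)
    + dotv (p - xk) (z - p) + eta * dotv (gk - G xk) (z - p).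
Proof.
move=> p_prox rz.
have := prox_ineq r_proper r_convex eta_gt0 p_prox rz.
have := smooth_upper_bound xk (p - xk) f_derive G_lip; rewrite addrC subrK.
have := strongly_convex_grad xk z f_sc f_derive.
have -> : p - (xk - eta *: gk) = (p - xk) + eta *: G xk + eta *: (gk - G xk).
  by apply/matrixP => i j; rewrite !mxE; ring.
have -> : z - p = (z - xk) - (p - xk) by apply/matrixP => i j; rewrite !mxE; ring.
move: (p - xk) (z - xk) (gk - G xk) => D u e.
rewrite !(dotvBr, dotvDl, dotvZl) (dotvC D u) (dotvC (G xk) D) (dotvC (G xk) u).
move=> /(ler_wpM2l (ltW eta_gt0)) f_z /(ler_wpM2l (ltW eta_gt0)) f_p; lra.
Qed.

Local Notation F y := ((f y)%:E + r y)%E.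

Variables (K : nat) (xs : vec) (x g : nat -> vec).
Hypothesis n_gt0 : (0 < n)%N.
Hypothesis mu_gt0 : 0 < mu.
Hypothesis xs_min : forall y, (F xs <= F y)%E.
Hypothesis x_prox : forall k, is_prox r eta (x k - eta *: g k) (x k.+1).
Hypothesis eta_le : eta <= (L * (K.+1)%:R)^-1.
Hypothesis g_err :
  forall k, enorm (g k - G (x k)) <= L * \sum_(k - K <= j < k) enorm (x j.+1 - x j).

(* [x 0] is arbitrary, so [r (x 0)] may be [+oo] and [Fk 0] is junk: the estimates on
   [Fk j] below all assume [0 < j]. *)
Local Notation Fk k := (fine (F (x k)) - fine (F xs)).
Local Notation D k := (x k.+1 - x k).
Local Notation e k := (g k - G (x k)).

Lemma L_gt0 : 0 < L.
Proof.
rewrite ltNge; apply/negP => L_le0.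
have : (L * (K.+1)%:R)^-1 <= 0 by rewrite invr_le0 mulr_le0_ge0.
by move/(le_trans eta_le); rewrite leNgt eta_gt0.
Qed.

Let L_ge0 : 0 <= L := ltW L_gt0.

Lemma eta_small : eta * L * (K.+1)%:R <= 1.
Proof. by rewrite -mulrA -ler_pdivlMr ?div1r // mulr_gt0 ?L_gt0. Qed.

Lemma etaL_le1 : eta * L <= 1.
Proof.
have K1 : 1 <= (K.+1)%:R :> R by rewrite ler1n.
exact: le_trans (ler_peMr (mulr_ge0 (ltW eta_gt0) (ltW L_gt0)) K1) eta_small.
Qed.

Lemma mu_le_L : mu <= L.
Proof.
pose v : vec := const_mx 1.
have v_gt0 : 0 < dotv v v.
  by rewrite /dotv (eq_bigr (fun=> 1)) ?sumr_const ?card_ord ?ltr0n // => j _; rewrite mxE mulr1.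
have := strongly_convex_grad 0 v f_sc f_derive; have := smooth_upper_bound 0 v f_derive G_lip.
rewrite add0r subr0 => f_up f_low.
by rewrite -(ler_pM2r v_gt0) -(ler_pM2r (ltr0n R 2)); lra.
Qed.

Let xs_fin : r xs \is a fin_num := argmin_fin_num r_proper xs_min.

Let x_fin k : r (x k.+1) \is a fin_num := prox_fin_num r_proper eta_gt0 (x_prox k).

Lemma FkE k : Fk k.+1 = phi (x k.+1) - phi xs.
Proof. by rewrite !fineD. Qed.

Lemma Fk_ge0 k : (0 < k)%N -> 0 <= Fk k.
Proof. by case: k => // k _; rewrite FkE subr_ge0 (argmin_le r_proper xs_min). Qed.

Lemma Fk_descent k : (0 < k)%N ->
  eta * (Fk k.+1 - Fk k) <= (eta * L / 2 - 1) * dotv (D k) (D k) - eta * dotv (e k) (D k).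
Proof.
case: k => // k _; rewrite !FkE.
have := prox_grad_ineq (x_prox k.+1) (x_fin k).
rewrite subrr dotv0l -[x k.+1 - _]opprB !dotvNr; lra.
Qed.

Lemma sqr_step_le_descent j : (0 < j)%N ->
  (1 - eta * L) * dotv (D j) (D j) <=
    2 * eta * (Fk j - Fk j.+1) + eta ^+ 2 * dotv (e j) (e j).
Proof.
move=> j_gt0; have := Fk_descent j_gt0; have := dotv_young (- eta) 1 (e j) (D j).
by rewrite sqrrN expr1n !mulr1 mul1r; lra.
Qed.

(* [2 * eta * L <= 1] is only needed to absorb the cross term [dotv (e k) (D k)]. *)
Lemma Fk_contraction k : (0 < k)%N -> 2 * eta * L <= 1 \/ e k = 0 ->
  Fk k.+1 <= (1 - eta * mu / 4) * Fk k + 3 / 4 * eta * dotv (e k) (e k).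
Proof.
move=> k_gt0 eta_e; set u := xs - x k.
have gap : eta * Fk k.+1 <= eta * L / 2 * dotv (D k) (D k) - eta * mu / 2 * dotv u u
    + dotv (D k) (u - D k) + eta * dotv (e k) (u - D k).
  have -> : u - D k = xs - x k.+1 by rewrite opprB addrA subrK.
  by rewrite FkE; exact: prox_grad_ineq (x_prox k) xs_fin.
(* Average the descent and gap estimates with weight [eta * mu / 4] and remove the
   cross terms with [u] by Young's inequality. *)
have young_Du := dotv_young (eta * mu / 2) 1 u (D k).
have young_eu := ler_wpM2l (sqr_ge0 eta) (dotv_young (mu / 2) 1 u (e k)).
rewrite !(dotvBr _ u) in gap; rewrite (dotvC u) in young_Du; rewrite (dotvC u) in young_eu.
have eL1 := etaL_le1.
have emu : eta * mu <= eta * L by rewrite ler_pM2l // mu_le_L.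
have emu_ge0 : 0 <= eta * mu by rewrite mulr_ge0 ?ltW.
have th1 : 0 <= 1 - eta * mu / 4 by lra.
have th0 : 0 <= eta * mu / 4 by lra.
rewrite -(ler_pM2l eta_gt0).
have := ler_wpM2l th1 (Fk_descent k_gt0); have := ler_wpM2l th0 gap.
case: eta_e => [eta_L | ->].
  have eL : 0 <= 1 - 2 * eta * L by lra.
  have := dotv_young (- eta) 1 (e k) (D k); have := mulr_ge0 eL (dotv_ge0 (D k)).
  by rewrite sqrrN !expr1n; lra.
have eL : 0 <= 1 - eta * L by lra.
have := mulr_ge0 (sqr_ge0 (eta * mu)) (dotv_ge0 u).
rewrite !dotv0l; have := mulr_ge0 eL (dotv_ge0 (D k)); have := dotv_ge0 (D k); lra.
Qed.

Lemma Fk_step k : (0 < k)%N ->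
  (1 + eta * mu / 8) * Fk k.+1 <= Fk k + eta * dotv (e k) (e k).
Proof.
move=> k_gt0; have eta_e : 2 * eta * L <= 1 \/ e k = 0.
  have [K0|K_gt0] := posnP K.
    right; apply: enorm_eq0; apply/le_anti; rewrite enorm_ge0 andbT.
    by have := g_err k; rewrite K0 subn0 big_geq // mulr0.
  left; apply: le_trans eta_small.
  by rewrite -mulrA [leRHS]mulrC ler_pM2r ?mulr_gt0 ?L_gt0 // ler_nat.
have s_ge0 : 0 <= eta * mu by rewrite mulr_ge0 ?ltW.
have s_le1 : eta * mu <= 1.
  by apply: le_trans etaL_le1; rewrite ler_pM2l ?mu_le_L.
have ee_ge0 : 0 <= eta * dotv (e k) (e k) by rewrite mulr_ge0 ?dotv_ge0 ?ltW.
have A_ge0 := Fk_ge0 k_gt0.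
have := mulr_ge0 s_ge0 A_ge0; have := mulr_ge0 (sqr_ge0 (eta * mu)) A_ge0.
have s1 : 0 <= 1 - eta * mu by lra.
have s8 : 0 <= 1 + eta * mu / 8 by lra.
have := mulr_ge0 s1 ee_ge0; have := ler_wpM2l s8 (Fk_contraction k_gt0 eta_e).
lra.
Qed.

Lemma sqr_err_le_window l :
  dotv (e l) (e l) <= L ^+ 2 * K%:R * \sum_(l - K <= j < l) dotv (D j) (D j).
Proof.
set W := \sum_(l - K <= j < l) enorm (D j).
have W_ge0 : 0 <= W by apply: sumr_ge0 => j _; exact: enorm_ge0.
have : enorm (e l) ^+ 2 <= (L * W) ^+ 2.
  by rewrite ler_pXn2r ?nnegrE ?enorm_ge0 ?mulr_ge0 // g_err.
rewrite sqr_enorm exprMn => /le_trans; apply; rewrite -mulrA ler_wpM2l ?sqr_ge0 //.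
apply: le_trans (sqr_sum_le _ _) _; rewrite size_iota.
under eq_bigr do rewrite sqr_enorm.
rewrite ler_wpM2r ?ler_nat ?sumr_ge0 // => [j _|]; [exact: dotv_ge0 | lia].
Qed.

Lemma sqr_step_le_gaps j : (0 < j)%N -> mu * dotv (D j) (D j) <= 4 * (Fk j + Fk j.+1).
Proof.
case: j => // j _; rewrite !FkE.
have := strongly_convex_argmin_growth r_proper r_convex xs_min f_sc (x_fin j).
have := strongly_convex_argmin_growth r_proper r_convex xs_min f_sc (x_fin j.+1).
have := dotvB_le (x j.+2 - xs) (x j.+1 - xs); rewrite opprB addrA subrK.
by move=> /(ler_wpM2l (ltW mu_gt0)); lra.
Qed.

Local Notation eps i := (2 * eta * L * (eta * K%:R * L) ^+ (i - 1)).

Theorem inexact_prox_grad_recursion (a k : nat) : (2 <= a)%N -> (a * K + 1 <= k)%N ->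
  (1 + eta * mu / 8) * Fk k.+1 <=
    (1 - \sum_(1 <= i < a) eps i) * Fk k + \sum_(1 <= i < a) eps i * Fk (k - i * K)%N
    + 4 * K%:R * (L / mu) * eps (a - 1)%N * \sum_(k - a * K <= j < k.+1) Fk j.
Proof.
rewrite addn1 => a_ge2 k_gt; have lo_gt0 : (0 < k - a * K)%N by rewrite subn_gt0.
have j_gt0 j : (k - a * K <= j)%N -> (0 < j)%N by move/(leq_trans lo_gt0).
apply: (delayed_recursion (d := fun j => dotv (D j) (D j)) (e := fun j => dotv (e j) (e j)))
  => //.
- exact: L_gt0.
- exact: eta_small.
- by move=> j /j_gt0; exact: Fk_ge0.
- by move=> j; exact: dotv_ge0.
- exact: Fk_step (leq_trans lo_gt0 (leq_subr _ _)).
- by move=> j /j_gt0; exact: sqr_step_le_descent.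
- exact: sqr_err_le_window.
- by move=> j /j_gt0; exact: sqr_step_le_gaps.
Qed.

End InexactProxGradient.

Section Average.
Variables (R : realType) (n m : nat).
Local Notation vec := 'rV[R]_n.
Variables (fi : 'I_m -> vec -> R) (gfi : 'I_m -> vec -> vec) (Li : 'I_m -> R).
Local Notation avg_grad p := (m%:R^-1 *: \sum_(i < m) gfi i (p i)).

Lemma is_derive_avg : (forall i, is_gradient (fi i) (gfi i)) ->
  forall y v, is_derive y v (fun z => m%:R^-1 * \sum_(i < m) fi i z)
                           (dotv (m%:R^-1 *: \sum_(i < m) gfi i y) v).
Proof.
move=> fi_grad y v.
have fi_derive i : is_derive y v (fi i) (dotv (gfi i y) v).
  have [fi_diff fi_d] := fi_grad i y.
  by split; [exact: diff_derivable | rewrite deriveE // fi_d].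
have := is_deriveZ m%:R^-1 (is_derive_sum fi_derive).
have -> : m%:R^-1 \*: \sum_(i < m) fi i = fun z => m%:R^-1 * \sum_(i < m) fi i z.
  by apply/funext => z /=; rewrite fct_sumE.
by rewrite dotvZl dotv_suml.
Qed.

Hypothesis Li_ge0 : forall i, 0 <= Li i.
Hypothesis gfi_lip : forall i u v, enorm (gfi i u - gfi i v) <= Li i * enorm (u - v).

Lemma enorm_avg_grad_le (p q : 'I_m -> vec) :
  enorm (avg_grad p - avg_grad q) <= m%:R^-1 * \sum_(i < m) Li i * enorm (p i - q i).
Proof.
rewrite -scalerBr -sumrB enormZ ger0_norm ?invr_ge0 // ler_wpM2l ?invr_ge0 //.
by apply: le_trans (enorm_sum _ _ _) _; apply: ler_sum => i _; exact: gfi_lip.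
Qed.

Lemma enorm_delayed_avg_grad_le (x : nat -> vec) (tau : 'I_m -> nat) (K k : nat) :
  (forall i, (k - K <= tau i <= k)%N) ->
  enorm (avg_grad (x \o tau) - avg_grad (fun=> x k)) <=
    (m%:R^-1 * \sum_(i < m) Li i) * \sum_(k - K <= j < k) enorm (x j.+1 - x j).
Proof.
move=> tau_delay; apply: le_trans (enorm_avg_grad_le _ _) _.
rewrite -mulrA mulr_suml ler_wpM2l ?invr_ge0 // ler_sum // => i _.
have /andP[lo hi] := tau_delay i; rewrite ler_wpM2l //= -enormN opprB.
apply: le_trans (enormB_le_sum x hi) _; apply: ler_psum_nat_widen => // j _.
exact: enorm_ge0.
Qed.

End Average.

Unset Implicit Arguments.

Theorem corollary1 (R : realType) (m n : nat)
  (fi : 'I_m -> 'rV[R]_n -> R) (gfi : 'I_m -> 'rV[R]_n -> 'rV[R]_n)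
  (Li : 'I_m -> R) (mu : R) (r : 'rV[R]_n -> \bar R) (xstar : 'rV[R]_n)
  (K : nat) (eta : R) (x : nat -> 'rV[R]_n) (tau : nat -> 'I_m -> nat) (a : nat) :
  (1 <= m)%N -> (1 <= n)%N ->
  (forall i, is_gradient (fi i) (gfi i)) ->
  (forall i, continuous (gfi i)) ->
  (forall i, 0 <= Li i) ->
  (forall i u v, enorm (gfi i u - gfi i v) <= Li i * enorm (u - v)) ->
  let f := fun y => m%:R^-1 * \sum_(i < m) fi i y in
  let L := m%:R^-1 * \sum_(i < m) Li i in
  0 < mu -> strongly_convex mu f ->
  proper_fun r -> closed_fun r -> convex_efun r ->
  let F := fun y => ((f y)%:E + r y)%E in
  (forall y, (F xstar <= F y)%E) ->
  (forall k i, (k - K <= tau k i <= k)%N) ->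
  let g := fun k => m%:R^-1 *: \sum_(i < m) gfi i (x (tau k i)) in
  (forall k, is_prox r eta (x k - eta *: g k) (x k.+1)) ->
  let Fk := fun k => fine (F (x k)) - fine (F xstar) in
  let Q := L / mu in
  0 < eta -> eta <= (L * (K.+1)%:R)^-1 ->
  (2 <= a)%N ->
  let eps := fun i : nat => 2 * eta * L * (eta * K%:R * L) ^+ (i - 1) in
  forall k : nat, (a * K + 1 <= k)%N ->
    (1 + eta * mu / 8) * Fk k.+1 <=
      (1 - \sum_(1 <= i < a) eps i) * Fk k
      + \sum_(1 <= i < a) eps i * Fk (k - i * K)%N
      + 4 * K%:R * Q * eps (a - 1)%N * \sum_(k - a * K <= j < k.+1) Fk j.
Proof.
move=> _ n_gt0 fi_grad _ Li_ge0 gfi_lip f L mu_gt0 f_sc r_proper _ r_convex F xs_min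
  tau_delay g x_prox Fk Q eta_gt0 eta_le a_ge2 eps k k_ge.

pose G y := m%:R^-1 *: \sum_(i < m) gfi i y.
have G_lip u v : enorm (G u - G v) <= L * enorm (u - v).
  apply: le_trans (enorm_avg_grad_le gfi_lip (fun=> u) (fun=> v)) _.
  by rewrite -mulrA mulr_suml.
have g_err j : enorm (g j - G (x j)) <= L * \sum_(j - K <= l < j) enorm (x l.+1 - x l).
  exact: enorm_delayed_avg_grad_le Li_ge0 gfi_lip x (tau j) K j (tau_delay j).
exact: (inexact_prox_grad_recursion (is_derive_avg fi_grad) G_lip f_sc r_proper r_convex
  eta_gt0 n_gt0 mu_gt0 xs_min x_prox eta_le g_err a_ge2 k_ge).
Qed.
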